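(* Under the standing assumptions below, for $k,h\ge1$ let $\widetilde{X'_k}(h)$ be defined recursively by $$\widetilde{X'_k}(h)=-\sum_{j=1}^{h-1}a_j\,\widetilde{X'_k}(h-j)-\sum_{j=1}^{k}a_{h-1+j}X_{k+1-j}.$$ Then for every $\delta>0$, $$\mathbb E\big[(\widetilde{X'_k}(h)-X_{k+h})^2\big]=\sigma_\varepsilon^2\sum_{l=0}^{h-1}b_l^2+O\big(h^{2d+\delta}k^{-1+\delta}\big).$$ That is, there is a constant $C_\delta$ such that the absolute value of the difference between the left side and $\sigma_\varepsilon^2\sum_{l=0}^{h-1}b_l^2$ is at most $C_\delta h^{2d+\delta}k^{-1+\delta}$ for all $k,h\ge1$.
   Context: Standing assumptions. Let $(X_n)_{n\in\mathbb Z}$ be a real, zero-mean, weakly stationary process in $L^2$ with autocovariance function $\sigma(j)=\mathbb E[X_nX_{n+j}]$, satisfying $\sum_{j\in\mathbb Z}|\sigma(j)|=\infty$. Assume $X_n=\sum_{j\ge0}b_j\varepsilon_{n-j}$ (convergence in $L^2$). Here $(\varepsilon_n)_{n\in\mathbb Z}$ is a sequence of uncorrelated random variables with mean $0$ and variance $\sigma_\varepsilon^2>0$, and $b_0=1$, $\sum_j b_j^2<\infty$. Assume also $\varepsilon_n=\sum_{j\ge0}a_jX_{n-j}$ with $a_0=1$ and $\sum_j|a_j|<\infty$. The power series $A(z)=\sum_{j\ge0}a_jz^j$ and $B(z)=\sum_{j\ge0}b_jz^j$ satisfy $A(z)B(z)=1$ for $|z|\le1$. Fix $d\in(0,1/2)$.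 Assume that for every $\delta>0$ there exist constants $C_1,C_2$ (depending on $\delta$) such that $|a_j|\le C_1j^{-d-1+\delta}$ and $|b_j|\le C_2j^{d-1+\delta}$ for all $j\ge1$. *)

From Stdlib Require Import Reals Lra Lia ZArith Arith.
Open Scope R_scope.

(* L^2(Omega, F, P) of a probability
   space, with E[U V] as inner product, is an instance (the inner product is
   only positive SEMI-definite, so no quotient by null functions is needed). *)
Record IPSpace := {
  car :> Type;
  vzero : car;
  vadd : car -> car -> car;
  vopp : car -> car;
  vscal : R -> car -> car;
  ip : car -> car -> R;
  vadd_assoc : forall x y z, vadd x (vadd y z) = vadd (vadd x y) z;
  vadd_comm : forall x y, vadd x y = vadd y x;
  vadd_0 : forall x, vadd x vzero = x;
  vadd_opp : forall x, vadd x (vopp x) = vzero;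
  vscal_1 : forall x, vscal 1 x = x;
  vscal_assoc : forall c e x, vscal c (vscal e x) = vscal (c * e) x;
  vscal_distr_v : forall c x y, vscal c (vadd x y) = vadd (vscal c x) (vscal c y);
  vscal_distr_s : forall c e x, vscal (c + e) x = vadd (vscal c x) (vscal e x);
  ip_sym : forall x y, ip x y = ip y x;
  ip_add_l : forall x y z, ip (vadd x y) z = ip x z + ip y z;
  ip_scal_l : forall c x z, ip (vscal c x) z = c * ip x z;
  ip_pos : forall x, 0 <= ip x x
}.

Arguments vzero {_}.
Arguments vadd {_}.
Arguments vopp {_}.
Arguments vscal {_}.
Arguments ip {_}.

Definition vsub {H : IPSpace} (x y : H) : H := vadd x (vopp y).

Definition msq {H : IPSpace} (x : H) : R := ip x x.

Fixpoint vsumn {H : IPSpace} (f : nat -> H) (n : nat) : H :=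
  match n with
  | O => vzero
  | S m => vadd (vsumn f m) (f m)
  end.

(* One step of the recursion: given the values P 1, ..., P (h-1),
   returns  - sum_{j=1}^{h-1} a_j P(h-j) - sum_{j=1}^{k} a_{h-1+j} X_{k+1-j}. *)
Definition pred_step {H : IPSpace} (a : nat -> R) (X : Z -> H) (k h : nat)
    (P : nat -> H) : H :=
  vsub (vopp (vsumn (fun i => vscal (a (S i)) (P (h - S i)%nat)) (h - 1)))
       (vsumn (fun i => vscal (a (h + i)%nat) (X (Z.of_nat k - Z.of_nat i)%Z)) k).

(* predF a X k n h = the predictor X'_k~(h) for 1 <= h <= n. *)
Fixpoint predF {H : IPSpace} (a : nat -> R) (X : Z -> H) (k n : nat) : nat -> H :=
  match n with
  | O => fun _ => vzero
  | S m => let P := predF a X k m in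
           fun h => if (h <=? m)%nat then P h else pred_step a X k h P
  end.

Definition predictor {H : IPSpace} (a : nat -> R) (X : Z -> H) (k h : nat) : H :=
  predF a X k h h.

From Stdlib Require Import Reals Lra Lia ZArith Arith.
Open Scope R_scope.

(** Let [D_h] be the prediction error [X'_k(h) - X_{k+h}] and
   [V_m = - sum_{j < m+k} a_j X_{k+m-j}] the AR(oo) filter at time [k+m]
   truncated to the observations [X_1, ..., X_{k+m}].  Subtracting the AR
   relation ([a_0 = 1]) from the defining recursion gives
   [D_h = V_h - sum_{i=1}^{h-1} a_i D_{h-i}]; since [A(z) B(z) = 1], the
   filtered sequence [W_h = sum_{l<h} b_l V_{h-l}] satisfies the same
   recursion, so [D_h = W_h].  Now [V_m = rho_m - eps_{k+m}], where [rho_m] is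
   the tail [sum_{j >= m+k} a_j X_{k+m-j}] of the AR(oo) expansion: it only
   involves [X_t] with [t <= 0], hence is orthogonal to the innovations
   [eps_s], [s >= 1].  Thus [D_h = T_h - E_h] with
   [E_h = sum_{l<h} b_l eps_{k+h-l}] orthogonal to [T_h = sum_{l<h} b_l rho_{h-l}]
   and [E[D_h^2] = s2 sum_{l<h} b_l^2 + E[T_h^2]].

   To bound [E[T_h^2]], the MA(oo) representation yields the covariance decay
   [|Cov(X_n, X_{n+r})| = O((r+1)^{-(1-2d-3 eta)})]; writing (a truncation of)
   [T_h] as a linear combination of [X_0, X_{-1}, ...] whose coefficient on
   [X_{-i}] is [O(h^{d+2 eta} (k+i+1)^{-1-d+eta})], the resulting quadratic
   form is [O(h^{2d+4 eta} k^{-1+7 eta})].  Choosing [7 eta <= delta] gives the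
   claim. *)

Fixpoint rsum (f : nat -> R) (n : nat) : R :=
  match n with O => 0 | S m => rsum f m + f m end.

Lemma rsum_ext f g n : (forall i, (i < n)%nat -> f i = g i) -> rsum f n = rsum g n.
Proof. induction n; simpl; intros E; auto. rewrite IHn, E; auto. Qed.

Lemma rsum_le f g n : (forall i, (i < n)%nat -> f i <= g i) -> rsum f n <= rsum g n.
Proof. induction n; simpl; intros E. lra. apply Rplus_le_compat; auto. Qed.

Lemma rsum_nonneg f n : (forall i, (i < n)%nat -> 0 <= f i) -> 0 <= rsum f n.
Proof.
  induction n; simpl; intros Hf. lra.
  assert (0 <= f n) by (apply Hf; lia).
  assert (0 <= rsum f n) by (apply IHn; intros; apply Hf; lia). lra.
Qed.

Lemma rsum_abs f n : Rabs (rsum f n) <= rsum (fun i => Rabs (f i)) n.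
Proof.
  induction n; simpl. rewrite Rabs_R0; lra.
  eapply Rle_trans. apply Rabs_triang. lra.
Qed.

Lemma rsum_scal c f n : rsum (fun i => c * f i) n = c * rsum f n.
Proof. induction n; simpl. ring. rewrite IHn; ring. Qed.

Lemma rsum_plus f g n : rsum (fun i => f i + g i) n = rsum f n + rsum g n.
Proof. induction n; simpl. ring. rewrite IHn; ring. Qed.

Lemma rsum_zero f n : (forall i, (i < n)%nat -> f i = 0) -> rsum f n = 0.
Proof. induction n; simpl; intros E; auto. rewrite IHn, E; auto; ring. Qed.

Lemma rsum_split f n m : rsum f (n + m) = rsum f n + rsum (fun i => f (n + i)%nat) m.
Proof.
  induction m; simpl. rewrite Nat.add_0_r; ring.
  rewrite Nat.add_succ_r; simpl. rewrite IHm; ring.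
Qed.

Lemma rsum_exch F n m :
  rsum (fun i => rsum (fun j => F i j) m) n = rsum (fun j => rsum (fun i => F i j) n) m.
Proof. induction n; simpl. rewrite rsum_zero; auto. rewrite IHn, <- rsum_plus. reflexivity. Qed.

Lemma rsum_sum_f_R0 f n : rsum f (S n) = sum_f_R0 f n.
Proof. induction n; simpl. ring. simpl in IHn. rewrite <- IHn. ring. Qed.

Lemma rsum_single (f g : nat -> R) j0 M : (forall j, j <> j0 -> g j = 0) ->
  rsum (fun j => f j * g j) M = if (j0 <? M)%nat then f j0 * g j0 else 0.
Proof.
  intros Hg. induction M as [|M IH]; [reflexivity|].
  cbn [rsum]. rewrite IH. destruct (Nat.eq_dec M j0) as [->|HM].
  - rewrite (proj2 (Nat.ltb_ge j0 j0)), (proj2 (Nat.ltb_lt j0 (S j0))) by lia. ring.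
  - rewrite (Hg M HM). destruct (j0 <? M)%nat eqn:E.
    + apply Nat.ltb_lt in E. rewrite (proj2 (Nat.ltb_lt j0 (S M))) by lia. ring.
    + apply Nat.ltb_ge in E. rewrite (proj2 (Nat.ltb_ge j0 (S M))) by lia. ring.
Qed.

(** * Estimates on real powers *)

Lemma Rpower_pos x e : 0 < Rpower x e.
Proof. apply exp_pos. Qed.

Lemma Rpower_base_1 e : Rpower 1 e = 1.
Proof. unfold Rpower. rewrite ln_1, Rmult_0_r. apply exp_0. Qed.

Lemma Rpower_antitone x y e : 0 < x <= y -> e <= 0 -> Rpower y e <= Rpower x e.
Proof.
  intros Hxy He. replace e with (- - e) by ring.
  rewrite (Rpower_Ropp y (- e)), (Rpower_Ropp x (- e)).
  apply Rinv_le_contravar. apply Rpower_pos. apply Rle_Rpower_l; lra.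
Qed.

Lemma Rpower_split_le x y z al ga : 0 < x <= z -> 0 < y <= z -> 0 <= al -> 0 <= ga ->
  Rpower z (- (al + ga)) <= Rpower x (- al) * Rpower y (- ga).
Proof.
  intros. replace (- (al + ga)) with (- al + - ga) by ring. rewrite Rpower_plus.
  apply Rmult_le_compat; try (left; apply Rpower_pos); apply Rpower_antitone; lra.
Qed.

(** [(x+1)^{-1-e} <= (x^{-e} - (x+1)^{-e}) / e]: the mean value estimate
    making [sum (j+1)^{-1-e}] telescope. *)
Lemma Rpower_telescope_step x e : 1 <= x -> 0 < e ->
  Rpower (x + 1) (- (1 + e)) * e <= Rpower x (- e) - Rpower (x + 1) (- e).
Proof.
  intros Hx He. set (y := x + 1).
  assert (Hlog : / y <= ln y - ln x).
  { pose proof (exp_ineq1_le (ln x - ln y)) as E.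
    replace (ln x - ln y) with (ln x + - ln y) in E by ring.
    rewrite exp_plus, exp_Ropp, !exp_ln in E by (unfold y; lra).
    replace (/ y) with (1 - x * / y) by (unfold y; field; lra). lra. }
  assert (E1 : Rpower x (- e) = Rpower y (- e) * exp (e * (ln y - ln x))).
  { unfold Rpower. rewrite <- exp_plus. f_equal. ring. }
  assert (E2 : Rpower y (- (1 + e)) = Rpower y (- e) * / y).
  { replace (- (1 + e)) with (- e + - (1)) by ring.
    rewrite Rpower_plus, (Rpower_Ropp y 1), Rpower_1; auto. unfold y; lra. }
  rewrite E1, E2. pose proof (exp_ineq1_le (e * (ln y - ln x))).
  pose proof (Rpower_pos y (- e)).
  assert (e * / y <= e * (ln y - ln x)) by (apply Rmult_le_compat_l; lra).
  nra.
Qed.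

Lemma zeta_partial_bound e : 0 < e -> forall n,
  rsum (fun j => Rpower (INR j + 1) (- (1 + e))) n <= 1 + / e.
Proof.
  intros He. pose proof (Rinv_0_lt_compat e He).
  assert (Htel : forall n, rsum (fun j => Rpower (INR j + 1) (- (1 + e))) (S n)
     <= 1 + (1 - Rpower (INR n + 1) (- e)) / e).
  { induction n as [|n IH].
    - cbn [rsum INR]. rewrite !Rplus_0_l, !Rpower_base_1. unfold Rdiv. lra.
    - cbn [rsum] in *. rewrite S_INR.
      assert (Hn : 1 <= INR n + 1) by (pose proof (pos_INR n); lra).
      pose proof (Rpower_telescope_step (INR n + 1) e Hn He) as T.
      assert (Rpower (INR n + 1 + 1) (- (1 + e)) <=
              (Rpower (INR n + 1) (- e) - Rpower (INR n + 1 + 1) (- e)) / e).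
      { apply (Rmult_le_reg_r e); auto. unfold Rdiv. rewrite Rmult_assoc, Rinv_l; lra. }
      assert (1 + (1 - Rpower (INR n + 1) (- e)) / e +
              (Rpower (INR n + 1) (- e) - Rpower (INR n + 1 + 1) (- e)) / e
            = 1 + (1 - Rpower (INR n + 1 + 1) (- e)) / e) by (field; lra).
      lra. }
  intros [|n]. simpl; lra.
  eapply Rle_trans. apply Htel. pose proof (Rpower_pos (INR n + 1) (- e)).
  unfold Rdiv. nra.
Qed.

Lemma power_partial_sum_bound q e h : 0 < e -> q <= 1 + e ->
  rsum (fun l => Rpower (INR l + 1) (- q)) h <= (1 + / e) * Rpower (INR h) (1 + e - q).
Proof.
  intros He Hq.
  apply Rle_trans with
    (rsum (fun l => Rpower (INR h) (1 + e - q) * Rpower (INR l + 1) (- (1 + e))) h).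
  - apply rsum_le. intros i Hi.
    replace (- q) with (- (1 + e) + (1 + e - q)) by ring. rewrite Rpower_plus, Rmult_comm.
    apply Rmult_le_compat_r. left; apply Rpower_pos.
    destruct (Req_dec (1 + e - q) 0) as [E|E].
    + rewrite E. unfold Rpower. rewrite !Rmult_0_l. lra.
    + apply Rle_Rpower_l. lra. split. pose proof (pos_INR i); lra.
      apply (le_INR (S i)) in Hi. rewrite S_INR in Hi. lra.
  - rewrite rsum_scal, Rmult_comm. apply Rmult_le_compat_r. left; apply Rpower_pos.
    apply zeta_partial_bound; auto.
Qed.

(** Sum of products of two power sequences at lag [r]: the bound that turns
    the MA(oo) representation into a covariance decay of order [be]. *)
Lemma lagged_product_sum_bound q be e r N : 0 < e -> 0 <= be <= q -> 2 * q - be = 1 + e ->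
  rsum (fun j => Rpower (INR j + 1) (- q) * Rpower (INR j + INR r + 1) (- q)) N
   <= (1 + / e) * Rpower (INR r + 1) (- be).
Proof.
  intros He Hbe Hq.
  apply Rle_trans with
    (rsum (fun j => Rpower (INR r + 1) (- be) * Rpower (INR j + 1) (- (1 + e))) N).
  - apply rsum_le. intros j _. pose proof (pos_INR j). pose proof (pos_INR r).
    pose proof (Rpower_split_le (INR r + 1) (INR j + 1) (INR j + INR r + 1) be (q - be)) as S.
    replace (- (be + (q - be))) with (- q) in S by ring.
    specialize (S ltac:(lra) ltac:(lra) ltac:(lra) ltac:(lra)).
    replace (- (1 + e)) with (- q + - (q - be)) by lra. rewrite Rpower_plus.
    pose proof (Rpower_pos (INR j + 1) (- q)).
    pose proof (Rpower_pos (INR r + 1) (- be)).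
    pose proof (Rpower_pos (INR j + 1) (- (q - be))).
    nra.
  - rewrite rsum_scal, Rmult_comm. apply Rmult_le_compat_r. left; apply Rpower_pos.
    apply zeta_partial_bound; auto.
Qed.

Definition nat_dist (i j : nat) : nat := ((i - j) + (j - i))%nat.

Lemma symmetric_double_sum_le (F : nat -> nat -> R) M :
  (forall i j, F i j = F j i) -> (forall i j, 0 <= F i j) ->
  rsum (fun i => rsum (fun j => F i j) M) M <=
  2 * rsum (fun i => rsum (fun j => if (i <=? j)%nat then F i j else 0) M) M.
Proof.
  intros Hs Hp.
  rewrite (rsum_ext (fun i => rsum (fun j => F i j) M)
    (fun i => rsum (fun j => if (i <=? j)%nat then F i j else 0) M +
              rsum (fun j => if (i <=? j)%nat then 0 else F i j) M)).
  2:{ intros i _. rewrite <- rsum_plus. apply rsum_ext. intros j _. destruct (i <=? j)%nat; ring. }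
  rewrite rsum_plus, (rsum_exch (fun i j => if (i <=? j)%nat then 0 else F i j)).
  assert (rsum (fun j => rsum (fun i => if (i <=? j)%nat then 0 else F i j) M) M
     <= rsum (fun i => rsum (fun j => if (i <=? j)%nat then F i j else 0) M) M).
  { apply rsum_le. intros j _. apply rsum_le. intros i _.
    destruct (i <=? j)%nat eqn:E.
    - destruct (j <=? i)%nat; auto; lra.
    - apply Nat.leb_gt in E. rewrite (proj2 (Nat.leb_le j i)) by lia. rewrite Hs. lra. }
  lra.
Qed.

Lemma upper_triangle_row (G : nat -> R) i M : (i <= M)%nat ->
  rsum (fun j => if (i <=? j)%nat then G j else 0) M = rsum (fun r => G (i + r)%nat) (M - i).
Proof.
  intros HiM. replace M with (i + (M - i))%nat at 1 by lia. rewrite rsum_split.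
  rewrite rsum_zero, Rplus_0_l.
  - apply rsum_ext. intros r _. rewrite (proj2 (Nat.leb_le i (i + r))) by lia. auto.
  - intros j Hj. rewrite (proj2 (Nat.leb_gt i j)) by lia. auto.
Qed.

Section WeightedDoubleSum.
Variables (kk p be e : R).
Hypothesis Hkk : 1 <= kk.
Hypothesis He : 0 < e.
Hypothesis Hga : 0 <= 1 + e - be <= p.
Hypothesis Hom : 0 <= 2 * p - (1 + e - be) - 1 - e.

Let ga := 1 + e - be.
Let om := 2 * p - ga - 1 - e.

Lemma triangle_term_le i r :
  Rpower (kk + INR i + 1) (- p) * Rpower (kk + INR (i + r) + 1) (- p) * Rpower (INR r + 1) (- be)
  <= Rpower (kk + INR i + 1) (- (2 * p - ga)) * Rpower (INR r + 1) (- (1 + e)).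
Proof.
  rewrite plus_INR. pose proof (pos_INR i). pose proof (pos_INR r).
  pose proof (Rpower_split_le (kk + INR i + 1) (INR r + 1) (kk + (INR i + INR r) + 1)
                (p - ga) ga) as S.
  replace (- (p - ga + ga)) with (- p) in S by ring.
  specialize (S ltac:(lra) ltac:(lra) ltac:(unfold ga in *; lra) ltac:(unfold ga in *; lra)).
  replace (- (2 * p - ga)) with (- p + - (p - ga)) by ring.
  replace (- (1 + e)) with (- ga + - be) by (unfold ga; ring). rewrite !Rpower_plus.
  pose proof (Rpower_pos (kk + INR i + 1) (- p)).
  pose proof (Rpower_pos (INR r + 1) (- be)).
  assert (Hpair : Rpower (kk + INR i + 1) (- p) * Rpower (kk + (INR i + INR r) + 1) (- p)
          <= Rpower (kk + INR i + 1) (- p) *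
             (Rpower (kk + INR i + 1) (- (p - ga)) * Rpower (INR r + 1) (- ga)))
    by (apply Rmult_le_compat_l; lra).
  apply Rmult_le_compat_r with (r := Rpower (INR r + 1) (- be)) in Hpair; [|lra].
  eapply Rle_trans; [exact Hpair|]. right; ring.
Qed.

Lemma weighted_double_sum_bound M :
  rsum (fun i => rsum (fun j => Rpower (kk + INR i + 1) (- p) * Rpower (kk + INR j + 1) (- p)
        * Rpower (INR (nat_dist i j) + 1) (- be)) M) M
  <= 2 * ((1 + / e) * (1 + / e)) * Rpower kk (- om).
Proof.
  assert (Hc : 0 < 1 + / e) by (pose proof (Rinv_0_lt_compat e He); lra).
  eapply Rle_trans. apply symmetric_double_sum_le.
  - intros. unfold nat_dist. rewrite (Nat.add_comm (i - j)). ring.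
  - intros. repeat apply Rmult_le_pos; left; apply Rpower_pos.
  - rewrite Rmult_assoc. apply Rmult_le_compat_l. lra.
    apply Rle_trans with (rsum (fun i => (1 + / e) * Rpower (kk + INR i + 1) (- (2 * p - ga))) M).
    + apply rsum_le. intros i Hi. rewrite upper_triangle_row by lia.
      apply Rle_trans with (rsum (fun r => Rpower (kk + INR i + 1) (- (2 * p - ga)) *
                                   Rpower (INR r + 1) (- (1 + e))) (M - i)).
      * apply rsum_le. intros r _. unfold nat_dist.
        replace ((i - (i + r)) + (i + r - i))%nat with r by lia. apply triangle_term_le.
      * rewrite rsum_scal, Rmult_comm. apply Rmult_le_compat_r. left; apply Rpower_pos.
        apply zeta_partial_bound; auto.
    + rewrite rsum_scal, Rmult_assoc. apply Rmult_le_compat_l. lra.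
      apply Rle_trans with (rsum (fun i => Rpower kk (- om) * Rpower (INR i + 1) (- (1 + e))) M).
      * apply rsum_le. intros i _. pose proof (pos_INR i).
        pose proof (Rpower_split_le kk (INR i + 1) (kk + INR i + 1) om (1 + e)) as S.
        replace (- (om + (1 + e))) with (- (2 * p - ga)) in S by (unfold om; ring).
        apply S; unfold om, ga in *; lra.
      * rewrite rsum_scal, Rmult_comm. apply Rmult_le_compat_r. left; apply Rpower_pos.
        apply zeta_partial_bound; auto.
Qed.
End WeightedDoubleSum.

(** * Algebra in a real pre-inner-product space *)

Arguments vadd_assoc {_} x y z.
Arguments vadd_comm {_} x y.
Arguments vadd_0 {_} x.
Arguments vadd_opp {_} x.
Arguments vscal_1 {_} x.
Arguments vscal_assoc {_} c e x.
Arguments vscal_distr_v {_} c x y.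
Arguments vscal_distr_s {_} c e x.
Arguments ip_sym {_} x y.
Arguments ip_add_l {_} x y z.
Arguments ip_scal_l {_} c x z.
Arguments ip_pos {_} x.

Section VectorAlgebra.
Context {H : IPSpace}.
Implicit Types x y z : H.
Implicit Types f g : nat -> H.

Lemma vadd_0l x : vadd vzero x = x.
Proof. rewrite vadd_comm; apply vadd_0. Qed.

Lemma vadd_cancel x y z : vadd x y = vadd x z -> y = z.
Proof.
  intros E. rewrite <- (vadd_0l y), <- (vadd_0l z), <- (vadd_opp x), (vadd_comm x).
  rewrite <- !vadd_assoc, E. reflexivity.
Qed.

Lemma vscal_0 x : vscal 0 x = vzero.
Proof. apply (vadd_cancel (vscal 0 x)). rewrite vadd_0, <- vscal_distr_s. f_equal; ring. Qed.

Lemma vopp_scal x : vopp x = vscal (-1) x.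
Proof.
  apply (vadd_cancel x). rewrite vadd_opp. rewrite <- (vscal_1 x) at 1.
  rewrite <- vscal_distr_s. replace (1 + -1) with 0 by ring. symmetry; apply vscal_0.
Qed.

Lemma vscal_zero c : vscal c (@vzero H) = vzero.
Proof. rewrite <- (vscal_0 vzero), vscal_assoc. f_equal; ring. Qed.

Lemma vopp_add x y : vopp (vadd x y) = vadd (vopp x) (vopp y).
Proof. rewrite !vopp_scal. apply vscal_distr_v. Qed.

Lemma vopp_opp x : vopp (vopp x) = x.
Proof. rewrite !vopp_scal, vscal_assoc. replace (-1 * -1) with 1 by ring. apply vscal_1. Qed.

Lemma vadd_swap4 x y z w : vadd (vadd x y) (vadd z w) = vadd (vadd x z) (vadd y w).
Proof. rewrite <- !vadd_assoc. f_equal. rewrite !vadd_assoc. f_equal. apply vadd_comm. Qed.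

Lemma vsub_add_r x y z : vadd x y = z -> x = vsub z y.
Proof. intros <-. unfold vsub. rewrite <- vadd_assoc, vadd_opp, vadd_0. auto. Qed.

Lemma vsub_vsub x y : vsub x (vsub x y) = y.
Proof. unfold vsub. rewrite vopp_add, vopp_opp, vadd_assoc, vadd_opp, vadd_0l. auto. Qed.

Lemma ip_zero_l z : ip (@vzero H) z = 0.
Proof. rewrite <- (vscal_0 vzero), ip_scal_l. ring. Qed.

Lemma ip_opp_l x z : ip (vopp x) z = - ip x z.
Proof. rewrite vopp_scal, ip_scal_l. ring. Qed.

Lemma ip_add_r x y z : ip z (vadd x y) = ip z x + ip z y.
Proof. rewrite !(ip_sym z), ip_add_l; auto. Qed.

Lemma ip_scal_r c x z : ip z (vscal c x) = c * ip z x.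
Proof. rewrite !(ip_sym z), ip_scal_l; auto. Qed.

Lemma ip_opp_r x z : ip z (vopp x) = - ip z x.
Proof. rewrite !(ip_sym z), ip_opp_l; auto. Qed.

Lemma ip_sub_l x y z : ip (vsub x y) z = ip x z - ip y z.
Proof. unfold vsub. rewrite ip_add_l, ip_opp_l. ring. Qed.

Lemma ip_sub_r x y z : ip z (vsub x y) = ip z x - ip z y.
Proof. unfold vsub. rewrite ip_add_r, ip_opp_r. ring. Qed.

Lemma vsumn_ext f g n : (forall i, (i < n)%nat -> f i = g i) -> vsumn f n = vsumn g n.
Proof. induction n; simpl; intros E; auto. rewrite IHn, E; auto. Qed.

Lemma vsumn_add f g n : vsumn (fun i => vadd (f i) (g i)) n = vadd (vsumn f n) (vsumn g n).
Proof. induction n; simpl. rewrite vadd_0; auto. rewrite IHn. apply vadd_swap4. Qed.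

Lemma vsumn_scal c f n : vsumn (fun i => vscal c (f i)) n = vscal c (vsumn f n).
Proof. induction n; simpl. rewrite vscal_zero; auto. rewrite IHn, vscal_distr_v; auto. Qed.

Lemma vsumn_opp f n : vsumn (fun i => vopp (f i)) n = vopp (vsumn f n).
Proof. rewrite vopp_scal, <- vsumn_scal. apply vsumn_ext; intros; apply vopp_scal. Qed.

Lemma vsumn_zero f n : (forall i, (i < n)%nat -> f i = vzero) -> vsumn f n = vzero.
Proof. induction n; simpl; intros E; auto. rewrite IHn, E, vadd_0; auto. Qed.

Lemma vsumn_split f n m : vsumn f (n + m) = vadd (vsumn f n) (vsumn (fun i => f (n + i)%nat) m).
Proof.
  induction m; simpl. rewrite Nat.add_0_r, vadd_0; auto.
  rewrite Nat.add_succ_r; simpl. rewrite IHm, vadd_assoc; auto.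
Qed.

Lemma vsumn_S_l f n : vsumn f (S n) = vadd (f 0%nat) (vsumn (fun i => f (S i)) n).
Proof. change (S n) with (1 + n)%nat. rewrite vsumn_split. simpl. rewrite vadd_0l. auto. Qed.

Lemma vsumn_exch (F : nat -> nat -> H) n m :
  vsumn (fun i => vsumn (fun j => F i j) m) n = vsumn (fun j => vsumn (fun i => F i j) n) m.
Proof. induction n; simpl. rewrite vsumn_zero; auto. rewrite IHn, <- vsumn_add. reflexivity. Qed.

Lemma vsumn_scal_l (c : nat -> R) x n : vsumn (fun i => vscal (c i) x) n = vscal (rsum c n) x.
Proof. induction n; simpl. rewrite vscal_0; auto. rewrite IHn, vscal_distr_s; auto. Qed.

Lemma vsumn_pad (c : nat -> R) (Y : nat -> H) L M : (L <= M)%nat ->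
  vsumn (fun i => vscal (c i) (Y i)) L =
  vsumn (fun i => vscal (if (i <? L)%nat then c i else 0) (Y i)) M.
Proof.
  intros HL. replace M with (L + (M - L))%nat by lia. rewrite vsumn_split.
  rewrite (vsumn_zero (fun i => vscal (if (L + i <? L)%nat then c (L + i)%nat else 0)
                                      (Y (L + i)%nat))), vadd_0.
  - apply vsumn_ext. intros i Hi. rewrite (proj2 (Nat.ltb_lt i L)) by lia. auto.
  - intros i _. rewrite (proj2 (Nat.ltb_ge (L + i) L)) by lia. apply vscal_0.
Qed.

Lemma vsumn_combine (c : nat -> R) (w : nat -> nat -> R) (Ln : nat -> nat) (Y : nat -> H) h M :
  (forall l, (Ln l <= M)%nat) ->
  vsumn (fun l => vscal (c l) (vsumn (fun i => vscal (w l i) (Y i)) (Ln l))) h =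
  vsumn (fun i => vscal (rsum (fun l => c l * (if (i <? Ln l)%nat then w l i else 0)) h) (Y i)) M.
Proof.
  intros HL.
  rewrite (vsumn_ext _ (fun l => vsumn (fun i =>
             vscal (c l * (if (i <? Ln l)%nat then w l i else 0)) (Y i)) M)).
  - rewrite vsumn_exch. apply vsumn_ext. intros i _. apply vsumn_scal_l.
  - intros l _. rewrite (vsumn_pad (w l) Y (Ln l) M), <- vsumn_scal by auto.
    apply vsumn_ext. intros i _. rewrite vscal_assoc. auto.
Qed.

Lemma ip_vsumn_l f n z : ip (vsumn f n) z = rsum (fun i => ip (f i) z) n.
Proof. induction n; simpl. apply ip_zero_l. rewrite ip_add_l, IHn; auto. Qed.

Lemma ip_vsumn_r f n z : ip z (vsumn f n) = rsum (fun i => ip z (f i)) n.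
Proof. rewrite ip_sym, ip_vsumn_l. apply rsum_ext. intros; apply ip_sym. Qed.

Lemma msq_add x y : msq (vadd x y) = msq x + msq y + 2 * ip x y.
Proof. unfold msq. rewrite ip_add_l, !ip_add_r, (ip_sym y x). ring. Qed.

Lemma msq_scal c x : msq (vscal c x) = c * c * msq x.
Proof. unfold msq. rewrite ip_scal_l, ip_scal_r. ring. Qed.

Lemma msq_pos x : 0 <= msq x.
Proof. apply ip_pos. Qed.

Lemma msq_lincomb (c : nat -> R) (Y : nat -> H) M :
  msq (vsumn (fun i => vscal (c i) (Y i)) M) =
  rsum (fun i => rsum (fun j => c i * c j * ip (Y i) (Y j)) M) M.
Proof.
  unfold msq. rewrite ip_vsumn_l. apply rsum_ext. intros i _.
  rewrite ip_vsumn_r. apply rsum_ext. intros j _. rewrite ip_scal_l, ip_scal_r. ring.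
Qed.

Lemma msq_lincomb_bound (c F : nat -> R) (G : nat -> nat -> R) (Y : nat -> H) M :
  (forall i, Rabs (c i) <= F i) -> (forall i j, Rabs (ip (Y i) (Y j)) <= G i j) ->
  msq (vsumn (fun i => vscal (c i) (Y i)) M) <=
  rsum (fun i => rsum (fun j => F i * F j * G i j) M) M.
Proof.
  intros Hc HG. rewrite msq_lincomb.
  eapply Rle_trans. apply Rle_abs. eapply Rle_trans. apply rsum_abs.
  apply rsum_le. intros i _. eapply Rle_trans. apply rsum_abs.
  apply rsum_le. intros j _. rewrite !Rabs_mult.
  pose proof (Hc i). pose proof (Hc j). pose proof (HG i j).
  pose proof (Rabs_pos (c i)). pose proof (Rabs_pos (c j)). pose proof (Rabs_pos (ip (Y i) (Y j))).
  apply Rmult_le_compat; try apply Rmult_le_pos; auto.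
  apply Rmult_le_compat; auto.
Qed.

(** Cauchy-Schwarz, by minimising [msq (x - t y)] over [t]. *)
Lemma cauchy_schwarz x y : ip x y * ip x y <= msq x * msq y.
Proof.
  pose proof (msq_pos x) as Hx. pose proof (msq_pos y) as Hy.
  assert (Hquad : forall t, 0 <= msq x - 2 * t * ip x y + t * t * msq y).
  { intros t. pose proof (msq_pos (vadd x (vscal (- t) y))) as P.
    rewrite msq_add, msq_scal, ip_scal_r in P. lra. }
  destruct (Req_dec (msq y) 0) as [E|E].
  - rewrite E. destruct (Req_dec (ip x y) 0) as [E2|E2]. rewrite E2; lra.
    specialize (Hquad ((msq x + 1) / ip x y)). rewrite E in Hquad.
    replace (2 * ((msq x + 1) / ip x y) * ip x y) with (2 * (msq x + 1)) in Hquad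
      by (field; auto). lra.
  - specialize (Hquad (ip x y / msq y)).
    apply (Rmult_le_compat_r (msq y)) in Hquad; [|lra].
    field_simplify in Hquad; [|lra]. nra.
Qed.

Definition nrm x := sqrt (msq x).

Lemma nrm_pos x : 0 <= nrm x.
Proof. apply sqrt_pos. Qed.

Lemma nrm_sq x : nrm x * nrm x = msq x.
Proof. apply sqrt_sqrt, msq_pos. Qed.

Lemma ip_le_nrm x y : Rabs (ip x y) <= nrm x * nrm y.
Proof.
  unfold nrm. rewrite <- sqrt_mult by apply msq_pos.
  rewrite <- sqrt_Rsqr_abs. apply sqrt_le_1_alt. apply cauchy_schwarz.
Qed.

Lemma nrm_add x y : nrm (vadd x y) <= nrm x + nrm y.
Proof.
  pose proof (nrm_pos x). pose proof (nrm_pos y). pose proof (nrm_pos (vadd x y)).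
  apply Rsqr_incr_0_var; [|lra]. unfold Rsqr.
  rewrite nrm_sq, msq_add, <- nrm_sq, <- (nrm_sq y).
  pose proof (ip_le_nrm x y). pose proof (Rle_abs (ip x y)). nra.
Qed.

Lemma nrm_scal c x : nrm (vscal c x) = Rabs c * nrm x.
Proof.
  unfold nrm. rewrite msq_scal, sqrt_mult_alt by apply Rle_0_sqr.
  change (c * c) with (Rsqr c). rewrite sqrt_Rsqr_abs; auto.
Qed.

Lemma nrm_sub x y : nrm (vsub x y) <= nrm x + nrm y.
Proof.
  unfold vsub. rewrite vopp_scal. eapply Rle_trans. apply nrm_add.
  rewrite nrm_scal, Rabs_left by lra. lra.
Qed.

Lemma nrm_vsumn f n : nrm (vsumn f n) <= rsum (fun i => nrm (f i)) n.
Proof.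
  induction n; simpl.
  - unfold nrm, msq. rewrite ip_zero_l, sqrt_0; lra.
  - eapply Rle_trans. apply nrm_add. lra.
Qed.

Lemma msq_le_of_nrm x c : nrm x <= sqrt c -> 0 <= c -> msq x <= c.
Proof.
  intros Hx Hc. rewrite <- nrm_sq, <- (sqrt_sqrt c Hc). pose proof (nrm_pos x).
  apply Rmult_le_compat; auto.
Qed.
End VectorAlgebra.

(** * Mean-square limits *)

Lemma le_of_slack x y K : 0 <= K -> (forall t, 0 < t -> x <= y + t * K) -> x <= y.
Proof.
  intros HK Hx. apply Rle_plus_epsilon. intros e He.
  specialize (Hx (e / (K + 1)) ltac:(apply Rdiv_lt_0_compat; lra)).
  enough (e / (K + 1) * K <= e) by lra.
  unfold Rdiv. rewrite Rmult_assoc, (Rmult_comm (/ _)).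
  replace e with (e * 1) at 2 by ring. apply Rmult_le_compat_l; [lra|].
  apply (Rmult_le_reg_r (K + 1)); [lra|]. rewrite Rmult_assoc, Rinv_l; lra.
Qed.

Lemma eventually_forall_lt (P : nat -> nat -> Prop) h :
  (forall l N N', (N <= N')%nat -> P l N -> P l N') ->
  (forall l, (l < h)%nat -> exists N0, P l N0) ->
  exists N0, forall l N, (l < h)%nat -> (N0 <= N)%nat -> P l N.
Proof.
  intros Hmono Hl. induction h as [|h IH].
  - exists 0%nat. intros; lia.
  - destruct IH as [N1 HN1]. { intros; apply Hl; lia. }
    destruct (Hl h) as [N2 HN2]. lia.
    exists (Nat.max N1 N2). intros l N Hlh HN.
    destruct (Nat.eq_dec l h) as [->|Hne].
    + apply (Hmono h N2); auto. lia.
    + apply HN1; lia.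
Qed.

Section MeanSquareLimits.
Context {H : IPSpace}.

Lemma cv_nrm (r : nat -> H) : Un_cv (fun N => msq (r N)) 0 ->
  forall t, 0 < t -> exists N0, forall N, (N0 <= N)%nat -> nrm (r N) < t.
Proof.
  intros Hc t Ht. destruct (Hc (t * t)) as [N0 HN0]. nra.
  exists N0. intros N HN. specialize (HN0 N HN). unfold R_dist in HN0.
  rewrite Rminus_0_r, Rabs_right in HN0 by (apply Rle_ge, msq_pos).
  unfold nrm. rewrite <- (sqrt_square t) by lra. apply sqrt_lt_1_alt. split; auto. apply msq_pos.
Qed.

Lemma ip_zero_of_approx (y x : H) (r : nat -> H) :
  Un_cv (fun N => msq (r N)) 0 ->
  (exists N0, forall N, (N0 <= N)%nat -> ip y x = ip y (r N)) -> ip y x = 0.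
Proof.
  intros Hc [N1 HN1].
  assert (Habs : Rabs (ip y x) <= 0).
  { apply Rle_plus_epsilon. intros e He. pose proof (nrm_pos y) as Hy.
    destruct (cv_nrm r Hc (e / (nrm y + 1))) as [N0 HN0]. apply Rdiv_lt_0_compat; lra.
    set (N := Nat.max N0 N1). specialize (HN0 N ltac:(unfold N; lia)).
    rewrite (HN1 N ltac:(unfold N; lia)). eapply Rle_trans. apply ip_le_nrm.
    pose proof (nrm_pos (r N)).
    apply Rle_trans with (nrm y * (e / (nrm y + 1))). apply Rmult_le_compat_l; lra.
    apply (Rmult_le_reg_r (nrm y + 1)). lra.
    unfold Rdiv. rewrite Rmult_assoc, Rmult_assoc, Rinv_l by lra. nra. }
  pose proof (Rabs_pos (ip y x)).
  destruct (Req_dec (ip y x) 0) as [E|E]; auto. apply Rabs_no_R0 in E. lra.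
Qed.

Lemma ip_limit_zero (y x : H) (P : nat -> H) :
  Un_cv (fun N => msq (vsub x (P N))) 0 -> (forall N, ip y (P N) = 0) -> ip y x = 0.
Proof.
  intros Hc HP. apply (ip_zero_of_approx y x _ Hc).
  exists 0%nat. intros N _. rewrite ip_sub_r, HP. ring.
Qed.

Lemma ip_bound_limit (x y : H) (P Q : nat -> H) c :
  Un_cv (fun N => msq (vsub x (P N))) 0 -> Un_cv (fun N => msq (vsub y (Q N))) 0 ->
  (forall N, Rabs (ip (P N) (Q N)) <= c) -> Rabs (ip x y) <= c.
Proof.
  intros HP HQ Hc. pose proof (nrm_pos x). pose proof (nrm_pos y).
  apply (le_of_slack _ _ (nrm x + nrm y + 1)); [lra|]. intros t Ht.
  set (t' := Rmin t 1). assert (Ht' : 0 < t' <= t /\ t' <= 1).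
  { unfold t', Rmin. destruct (Rle_dec t 1); lra. }
  destruct (cv_nrm _ HP t') as [N1 HN1]. lra.
  destruct (cv_nrm _ HQ t') as [N2 HN2]. lra.
  set (N := Nat.max N1 N2).
  specialize (HN1 N ltac:(unfold N; lia)). specialize (HN2 N ltac:(unfold N; lia)).
  assert (E : ip x y = ip (vsub x (P N)) y + (ip (P N) (vsub y (Q N)) + ip (P N) (Q N)))
    by (rewrite ip_sub_l, ip_sub_r; ring).
  assert (NP : nrm (P N) <= nrm x + t').
  { rewrite <- (vsub_vsub x (P N)). eapply Rle_trans. apply nrm_sub. lra. }
  pose proof (ip_le_nrm (vsub x (P N)) y). pose proof (ip_le_nrm (P N) (vsub y (Q N))).
  pose proof (Hc N). pose proof (nrm_pos (P N)).
  pose proof (nrm_pos (vsub x (P N))). pose proof (nrm_pos (vsub y (Q N))).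
  rewrite E. eapply Rle_trans. apply Rabs_triang.
  eapply Rle_trans. apply Rplus_le_compat_l. apply Rabs_triang.
  assert (nrm (vsub x (P N)) * nrm y <= t' * nrm y) by (apply Rmult_le_compat_r; lra).
  assert (nrm (P N) * nrm (vsub y (Q N)) <= (nrm x + t') * t')
    by (apply Rmult_le_compat; lra).
  nra.
Qed.

Lemma msq_le_of_approx (x : H) c K : 0 <= c -> 0 <= K ->
  (forall t, 0 < t -> exists y z, x = vadd y z /\ msq y <= c /\ nrm z <= t * K) ->
  msq x <= c.
Proof.
  intros Hc HK Happ. apply msq_le_of_nrm; auto.
  apply (le_of_slack _ _ K HK). intros t Ht.
  destruct (Happ t Ht) as (y & z & -> & Hy & Hz).
  eapply Rle_trans. apply nrm_add. apply Rplus_le_compat; auto.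
  apply sqrt_le_1_alt, Hy.
Qed.
End MeanSquareLimits.

(** * The prediction error satisfies a filtered recursion *)

Section AbelianIdentities.
Context {H : IPSpace}.

Lemma vsub_rearrange (A A' B X : H) :
  vadd (vsub (vsub (vopp A) B) X) (vsub A A') = vopp (vadd (vadd X A') B).
Proof.
  unfold vsub. rewrite !vopp_add, (vadd_comm (vopp A) (vopp B)).
  rewrite <- (vadd_assoc (vopp B) (vopp A) (vopp X)), (vadd_comm (vopp A) (vopp X)).
  rewrite <- !vadd_assoc, (vadd_assoc (vopp A) A (vopp A')).
  rewrite (vadd_comm (vopp A) A), vadd_opp, vadd_0l, vadd_comm, <- vadd_assoc. auto.
Qed.

Lemma vsub_add_sub (e A Q : H) : vadd e (vopp A) = vadd (vsub e (vadd A Q)) Q.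
Proof.
  unfold vsub. rewrite vopp_add, <- !vadd_assoc. f_equal.
  rewrite (vadd_comm (vopp Q)), vadd_opp, vadd_0. auto.
Qed.
End AbelianIdentities.

Section PredictionError.
Context {H : IPSpace} (a b : nat -> R) (X : Z -> H) (k : nat).
Hypothesis Ha0 : a 0%nat = 1.
Hypothesis HAB : forall n,
  sum_f_R0 (fun i => a i * b (n - i)%nat) n = if (n =? 0)%nat then 1 else 0.

Lemma predF_stable m h : (1 <= h <= m)%nat -> predF a X k m h = predictor a X k h.
Proof.
  induction m as [|m IH]; intros Hh. lia.
  simpl. destruct (h <=? m)%nat eqn:E.
  - apply Nat.leb_le in E. apply IH. lia.
  - apply Nat.leb_gt in E. replace h with (S m) by lia.
    unfold predictor. cbn [predF]. rewrite (proj2 (Nat.leb_gt (S m) m)) by lia. reflexivity.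
Qed.

Lemma predictor_rec h : (1 <= h)%nat ->
  predictor a X k h =
  vsub (vopp (vsumn (fun i => vscal (a (S i)) (predictor a X k (h - S i)%nat)) (h - 1)))
       (vsumn (fun i => vscal (a (h + i)%nat) (X (Z.of_nat k - Z.of_nat i)%Z)) k).
Proof.
  intros Hh. destruct h as [|m]. lia.
  unfold predictor at 1. cbn [predF].
  rewrite (proj2 (Nat.leb_gt (S m) m)) by lia. unfold pred_step.
  do 2 f_equal. apply vsumn_ext. intros i Hi. f_equal. apply predF_stable. lia.
Qed.

Definition pred_error h := vsub (predictor a X k h) (X (Z.of_nat (k + h))).

Definition ar_residual m :=
  vopp (vsumn (fun j => vscal (a j) (X (Z.of_nat (k + m) - Z.of_nat j)%Z)) (m + k)).

Lemma pred_error_rec h : (1 <= h)%nat ->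
  pred_error h =
  vsub (ar_residual h) (vsumn (fun i => vscal (a (S i)) (pred_error (h - S i)%nat)) (h - 1)).
Proof.
  intros Hh. apply vsub_add_r.
  set (A := vsumn (fun i => vscal (a (S i)) (predictor a X k (h - S i)%nat)) (h - 1)).
  set (A' := vsumn (fun i => vscal (a (S i)) (X (Z.of_nat (k + (h - S i))))) (h - 1)).
  set (B := vsumn (fun i => vscal (a (h + i)%nat) (X (Z.of_nat k - Z.of_nat i)%Z)) k).
  assert (EA : vsumn (fun i => vscal (a (S i)) (pred_error (h - S i)%nat)) (h - 1) = vsub A A').
  { unfold A, A', vsub, pred_error. rewrite <- vsumn_opp, <- vsumn_add.
    apply vsumn_ext. intros i _. unfold vsub.
    rewrite vscal_distr_v, !vopp_scal, !vscal_assoc, Rmult_comm. reflexivity. }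
  assert (EV : ar_residual h = vopp (vadd (vadd (X (Z.of_nat (k + h))) A') B)).
  { unfold ar_residual. f_equal. replace (h + k)%nat with (1 + (h - 1) + k)%nat by lia.
    rewrite !vsumn_split. f_equal; [f_equal|].
    - cbn [vsumn]. rewrite vadd_0l, Ha0, vscal_1. f_equal. lia.
    - apply vsumn_ext. intros i Hi. do 2 f_equal. lia.
    - apply vsumn_ext. intros i _. f_equal; f_equal; lia. }
  rewrite EA, EV. unfold pred_error. rewrite predictor_rec by auto. apply vsub_rearrange.
Qed.

Lemma cauchy_product_vsumn (U : nat -> H) n :
  vsumn (fun j => vscal (a j) (vsumn (fun l => vscal (b l) (U (j + l)%nat)) (n - j))) n
  = vsumn (fun m => vscal (rsum (fun j => a j * b (m - j)%nat) (S m)) (U m)) n.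
Proof.
  induction n as [|n IH]. reflexivity.
  cbn [vsumn]. rewrite <- IH.
  rewrite (vsumn_ext _ (fun j => vadd (vscal (a j) (vsumn (fun l => vscal (b l) (U (j + l)%nat)) (n - j)))
                                      (vscal (a j * b (n - j)%nat) (U n)))).
  2:{ intros j Hj. replace (S n - j)%nat with (S (n - j)) by lia. cbn [vsumn].
      rewrite vscal_distr_v, vscal_assoc. do 3 f_equal. lia. }
  rewrite vsumn_add, vsumn_scal_l, Nat.sub_succ_l, Nat.sub_diag by lia.
  cbn [vsumn rsum]. rewrite vadd_0l, vscal_assoc, Nat.sub_diag, Nat.add_0_r.
  rewrite <- vadd_assoc, <- vscal_distr_s. reflexivity.
Qed.

Definition filtered_residual h := vsumn (fun l => vscal (b l) (ar_residual (h - l)%nat)) h.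

(** Since [A(z) B(z) = 1], [W] satisfies the same recursion as [D]. *)
Lemma filtered_residual_rec h : (1 <= h)%nat ->
  filtered_residual h =
  vsub (ar_residual h) (vsumn (fun i => vscal (a (S i)) (filtered_residual (h - S i)%nat)) (h - 1)).
Proof.
  intros Hh. apply vsub_add_r.
  pose proof (cauchy_product_vsumn (fun m => ar_residual (h - m)%nat) h) as C.
  rewrite (vsumn_ext (fun m => vscal (rsum (fun j => a j * b (m - j)%nat) (S m)) (ar_residual (h - m)%nat))
      (fun m => vscal (if (m =? 0)%nat then 1 else 0) (ar_residual (h - m)%nat))) in C.
  2:{ intros m _. rewrite rsum_sum_f_R0, HAB. reflexivity. }
  destruct h as [|h']. lia.
  rewrite !vsumn_S_l in C. cbn [Nat.eqb] in C.
  rewrite vscal_1, (vsumn_zero (fun i => vscal 0 (ar_residual (S h' - S i))) h'), vadd_0,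
    !Nat.sub_0_r in C by (intros; apply vscal_0).
  replace (S h' - 1)%nat with h' by lia.
  rewrite <- C, Ha0, vscal_1. unfold filtered_residual. f_equal.
  apply vsumn_ext. intros i Hi. f_equal.
  apply vsumn_ext. intros l _. do 2 f_equal. lia.
Qed.

Lemma pred_error_filtered h : (1 <= h)%nat -> pred_error h = filtered_residual h.
Proof.
  revert h. enough (Hn : forall n h, (1 <= h <= n)%nat -> pred_error h = filtered_residual h).
  { intros h Hh. apply (Hn h). lia. }
  induction n as [|n IH]; intros h Hh. lia.
  rewrite pred_error_rec, filtered_residual_rec by lia. f_equal.
  apply vsumn_ext. intros i Hi. f_equal. apply IH. lia.
Qed.
End PredictionError.

(** * Orthogonal decomposition of the prediction error *)

Section Decomposition.
Context {H : IPSpace}.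
Variables (X eps : Z -> H) (a b : nat -> R) (s2 : R).
Hypothesis Heps_unc : forall n m, n <> m -> ip (eps n) (eps m) = 0.
Hypothesis Heps_var : forall n, msq (eps n) = s2.
Hypothesis HXma : forall n, Un_cv (fun N =>
      msq (vsub (X n) (vsumn (fun j => vscal (b j) (eps (n - Z.of_nat j)%Z)) (S N)))) 0.
Hypothesis HepsAR : forall n, Un_cv (fun N =>
      msq (vsub (eps n) (vsumn (fun j => vscal (a j) (X (n - Z.of_nat j)%Z)) (S N)))) 0.
Hypothesis Ha0 : a 0%nat = 1.
Hypothesis HAB : forall n,
  sum_f_R0 (fun i => a i * b (n - i)%nat) n = if (n =? 0)%nat then 1 else 0.

(** By causality of the MA(oo) representation, innovations are orthogonal
    to the past of [X]. *)
Lemma eps_orth_past s t : (t < s)%Z -> ip (eps s) (X t) = 0.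
Proof.
  intros Hts. apply (ip_limit_zero _ _ _ (HXma t)). intros N.
  rewrite ip_vsumn_r. apply rsum_zero. intros j _. rewrite ip_scal_r, Heps_unc by lia. ring.
Qed.

(** The tail [eps_n - sum_{j < L} a_j X_{n-j} = sum_{j >= L} a_j X_{n-j}] of
    the AR(oo) representation. *)
Definition ar_tail (n : Z) (L : nat) : H :=
  vadd (eps n) (vopp (vsumn (fun j => vscal (a j) (X (n - Z.of_nat j)%Z)) L)).

Lemma ar_tail_split n L N : (L <= S N)%nat ->
  ar_tail n L =
  vadd (vsub (eps n) (vsumn (fun j => vscal (a j) (X (n - Z.of_nat j)%Z)) (S N)))
       (vsumn (fun i => vscal (a (L + i)%nat) (X (n - Z.of_nat (L + i))%Z)) (S N - L)).
Proof.
  intros HL. unfold ar_tail. replace (S N) with (L + (S N - L))%nat at 1 by lia.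
  rewrite vsumn_split. apply vsub_add_sub.
Qed.

(** The tail only involves [X_t] with [t <= n - L]. *)
Lemma ar_tail_orth s n L : (n - Z.of_nat L < s)%Z -> ip (eps s) (ar_tail n L) = 0.
Proof.
  intros Hs. apply (ip_zero_of_approx _ _ _ (HepsAR n)).
  exists L. intros N HN. rewrite (ar_tail_split n L N), ip_add_r by lia.
  rewrite ip_vsumn_r, rsum_zero. ring.
  intros i _. rewrite ip_scal_r, eps_orth_past by lia. ring.
Qed.

Lemma msq_innovation_sum t n :
  msq (vsumn (fun l => vscal (b l) (eps (t - Z.of_nat l)%Z)) n) = s2 * rsum (fun l => b l ^ 2) n.
Proof.
  induction n as [|n IH].
  - unfold msq. simpl. rewrite ip_zero_l. ring.
  - cbn [vsumn rsum]. rewrite msq_add, IH, msq_scal, Heps_var, ip_vsumn_l.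
    rewrite (rsum_zero (fun i => ip (vscal (b i) (eps (t - Z.of_nat i)%Z))
                                    (vscal (b n) (eps (t - Z.of_nat n)%Z)))); [ring|].
    intros i Hi. rewrite ip_scal_l, ip_scal_r, Heps_unc by lia. ring.
Qed.

(** [T_h = sum_{l < h} b_l (AR tail at time k+h-l beyond lag h-l+k)]: the part
    of the error due to the unobserved past [X_t], [t <= 0]. *)
Definition excess k h :=
  vsumn (fun l => vscal (b l) (ar_tail (Z.of_nat (k + (h - l))) (h - l + k))) h.

(** [E[D_h^2] = s2 sum_{l<h} b_l^2 + E[T_h^2]]: [D_h = T_h - E_h], where
    [E_h = sum_{l<h} b_l eps_{k+h-l}] is orthogonal to [T_h]. *)
Lemma pred_error_decomposition k h : (1 <= h)%nat ->
  msq (pred_error a X k h) = s2 * rsum (fun l => b l ^ 2) h + msq (excess k h).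
Proof.
  intros Hh. rewrite (pred_error_filtered a b X k Ha0 HAB h Hh).
  set (E := vsumn (fun l => vscal (b l) (eps (Z.of_nat (k + (h - l))))) h).
  assert (ET : excess k h = vadd E (filtered_residual a b X k h)).
  { unfold excess, E, filtered_residual. rewrite <- vsumn_add. apply vsumn_ext. intros l _.
    rewrite <- vscal_distr_v. reflexivity. }
  assert (EE : msq E = s2 * rsum (fun l => b l ^ 2) h).
  { rewrite <- (msq_innovation_sum (Z.of_nat (k + h)) h). unfold E. f_equal.
    apply vsumn_ext. intros l Hl. do 2 f_equal. lia. }
  assert (Horth : ip E (excess k h) = 0).
  { unfold E. rewrite ip_vsumn_l. apply rsum_zero. intros l Hl.
    rewrite ip_scal_l. unfold excess. rewrite ip_vsumn_r, rsum_zero; [ring|].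
    intros l' Hl'. rewrite ip_scal_r, ar_tail_orth by lia. ring. }
  rewrite ET, ip_add_r in Horth. fold (msq E) in Horth.
  rewrite ET, msq_add, <- EE. lra.
Qed.
End Decomposition.

(** * Decay of the autocovariances *)

Section CovarianceDecay.
Context {H : IPSpace}.
Variables (X eps : Z -> H) (b : nat -> R) (s2 : R).
Hypothesis Heps_unc : forall n m, n <> m -> ip (eps n) (eps m) = 0.
Hypothesis Heps_var : forall n, msq (eps n) = s2.
Hypothesis HXma : forall n, Un_cv (fun N =>
      msq (vsub (X n) (vsumn (fun j => vscal (b j) (eps (n - Z.of_nat j)%Z)) (S N)))) 0.
Variables (B1 q be e : R).
Hypothesis Hb : forall j, Rabs (b j) <= B1 * Rpower (INR j + 1) (- q).
Hypothesis He : 0 < e.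
Hypothesis Hbe : 0 <= be <= q.
Hypothesis Hq : 2 * q - be = 1 + e.

Lemma B1_nonneg : 0 <= B1.
Proof.
  pose proof (Rabs_pos (b 0%nat)). pose proof (Hb 0%nat).
  pose proof (Rpower_pos (INR 0 + 1) (- q)). nra.
Qed.

Lemma s2_nonneg : 0 <= s2.
Proof. rewrite <- (Heps_var 0%Z). apply msq_pos. Qed.

Definition cov_const := s2 * (B1 * B1) * (1 + / e).

(** Only the innovation [eps_{n-j}] common to both sums contributes. *)
Lemma innovation_cross n r j N :
  ip (eps (n - Z.of_nat j)%Z) (vsumn (fun j' => vscal (b j') (eps (n + Z.of_nat r - Z.of_nat j')%Z)) N)
  = if (j + r <? N)%nat then b (j + r)%nat * s2 else 0.
Proof.
  rewrite ip_vsumn_r.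
  rewrite (rsum_ext _ (fun j' => b j' * ip (eps (n - Z.of_nat j)%Z) (eps (n + Z.of_nat r - Z.of_nat j')%Z)))
    by (intros; rewrite ip_scal_r; ring).
  rewrite (rsum_single _ _ (j + r)%nat) by (intros j' Hj'; apply Heps_unc; lia).
  replace (n + Z.of_nat r - Z.of_nat (j + r))%Z with (n - Z.of_nat j)%Z by lia.
  fold (msq (eps (n - Z.of_nat j)%Z)). rewrite Heps_var. reflexivity.
Qed.

Lemma partial_cov_bound n r N :
  Rabs (ip (vsumn (fun j => vscal (b j) (eps (n - Z.of_nat j)%Z)) N)
           (vsumn (fun j => vscal (b j) (eps (n + Z.of_nat r - Z.of_nat j)%Z)) N))
  <= cov_const * Rpower (INR r + 1) (- be).
Proof.
  pose proof B1_nonneg. pose proof s2_nonneg.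
  rewrite ip_vsumn_l. eapply Rle_trans. apply rsum_abs.
  apply Rle_trans with (rsum (fun j => s2 * (B1 * B1) * (Rpower (INR j + 1) (- q) *
                           Rpower (INR j + INR r + 1) (- q))) N).
  - apply rsum_le. intros j _. rewrite ip_scal_l, innovation_cross, Rabs_mult.
    pose proof (Hb j) as Hj. pose proof (Hb (j + r)%nat) as Hjr. rewrite plus_INR in Hjr.
    pose proof (Rabs_pos (b j)). pose proof (Rabs_pos (b (j + r)%nat)).
    pose proof (Rpower_pos (INR j + 1) (- q)). pose proof (Rpower_pos (INR j + INR r + 1) (- q)).
    destruct (j + r <? N)%nat.
    + rewrite Rabs_mult, (Rabs_right s2) by lra.
      apply Rle_trans with (B1 * Rpower (INR j + 1) (- q) *
                            (B1 * Rpower (INR j + INR r + 1) (- q) * s2)).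
      * apply Rmult_le_compat; try apply Rmult_le_pos; auto. apply Rmult_le_compat_r; lra.
      * right; ring.
    + rewrite Rabs_R0, Rmult_0_r. repeat apply Rmult_le_pos; nra.
  - rewrite rsum_scal. unfold cov_const. rewrite (Rmult_assoc (s2 * (B1 * B1)) (1 + / e)).
    apply Rmult_le_compat_l. nra. apply lagged_product_sum_bound; auto.
Qed.

Lemma cov_bound n r : Rabs (ip (X n) (X (n + Z.of_nat r)%Z)) <= cov_const * Rpower (INR r + 1) (- be).
Proof.
  apply (ip_bound_limit _ _ _ _ _ (HXma n) (HXma (n + Z.of_nat r)%Z)).
  intros N. apply partial_cov_bound.
Qed.

Lemma cov_bound_past i j : Rabs (ip (X (- Z.of_nat i)%Z) (X (- Z.of_nat j)%Z)) <=
   cov_const * Rpower (INR (nat_dist i j) + 1) (- be).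
Proof.
  destruct (le_lt_dec i j).
  - rewrite ip_sym. replace (- Z.of_nat i)%Z with (- Z.of_nat j + Z.of_nat (j - i))%Z by lia.
    replace (nat_dist i j) with (j - i)%nat by (unfold nat_dist; lia). apply cov_bound.
  - replace (- Z.of_nat j)%Z with (- Z.of_nat i + Z.of_nat (i - j))%Z by lia.
    replace (nat_dist i j) with (i - j)%nat by (unfold nat_dist; lia). apply cov_bound.
Qed.
End CovarianceDecay.

(** * Bound on the excess term *)

Section ExcessBound.
Context {H : IPSpace}.
Variables (X eps : Z -> H) (a b : nat -> R) (s2 : R).
Hypothesis Heps_unc : forall n m, n <> m -> ip (eps n) (eps m) = 0.
Hypothesis Heps_var : forall n, msq (eps n) = s2.
Hypothesis HXma : forall n, Un_cv (fun N =>
      msq (vsub (X n) (vsumn (fun j => vscal (b j) (eps (n - Z.of_nat j)%Z)) (S N)))) 0.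
Hypothesis HepsAR : forall n, Un_cv (fun N =>
      msq (vsub (eps n) (vsumn (fun j => vscal (a j) (X (n - Z.of_nat j)%Z)) (S N)))) 0.
Variables (A1 B1 p q be e : R).
Hypothesis Ha : forall j, (1 <= j)%nat -> Rabs (a j) <= A1 * Rpower (INR j) (- p).
Hypothesis Hb : forall j, Rabs (b j) <= B1 * Rpower (INR j + 1) (- q).
Hypothesis HA1 : 0 <= A1.
Hypothesis He : 0 < e.
Hypothesis Hbe : 0 <= be <= q.
Hypothesis Hq : 2 * q - be = 1 + e.
Hypothesis Hq1 : q <= 1 + e.
Hypothesis Hga : 0 <= 1 + e - be <= p.
Hypothesis Hom : 0 <= 2 * p - (1 + e - be) - 1 - e.

Definition truncated_excess k h N :=
  vsumn (fun l => vscal (b l) (vsumn (fun i => vscal (a (h - l + k + i)%nat) (X (- Z.of_nat i)%Z))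
                                     (S N - (h - l + k)))) h.

(** Its coefficient on [X_{-i}] is [O(h^{1+e-q} (k+i+1)^{-p})]. *)
Definition coef_const h := B1 * (1 + / e) * Rpower (INR h) (1 + e - q) * A1.

Lemma coef_const_nonneg h : 0 <= coef_const h.
Proof.
  pose proof (B1_nonneg b B1 q Hb). pose proof (Rinv_0_lt_compat e He).
  pose proof (Rpower_pos (INR h) (1 + e - q)). unfold coef_const.
  repeat apply Rmult_le_pos; lra.
Qed.

Lemma truncated_excess_coef k h N i : (1 <= k)%nat ->
  Rabs (rsum (fun l => b l * (if (i <? S N - (h - l + k))%nat then a (h - l + k + i)%nat else 0)) h)
  <= coef_const h * Rpower (INR k + INR i + 1) (- p).
Proof.
  intros Hk. pose proof (B1_nonneg b B1 q Hb) as HB1.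
  pose proof (Rpower_pos (INR k + INR i + 1) (- p)).
  eapply Rle_trans. apply rsum_abs.
  apply Rle_trans with
    (rsum (fun l => (B1 * (A1 * Rpower (INR k + INR i + 1) (- p))) * Rpower (INR l + 1) (- q)) h).
  - apply rsum_le. intros l Hl. rewrite Rabs_mult.
    replace (B1 * (A1 * Rpower (INR k + INR i + 1) (- p)) * Rpower (INR l + 1) (- q))
      with (B1 * Rpower (INR l + 1) (- q) * (A1 * Rpower (INR k + INR i + 1) (- p))) by ring.
    apply Rmult_le_compat; auto using Rabs_pos.
    destruct (i <? S N - (h - l + k))%nat.
    + eapply Rle_trans. apply Ha. lia. apply Rmult_le_compat_l; auto.
      apply Rpower_antitone; [|lra]. pose proof (pos_INR k); pose proof (pos_INR i).
      split; [lra|]. replace (h - l + k + i)%nat with (S (k + i) + (h - l - 1))%nat by lia.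
      rewrite plus_INR, S_INR, plus_INR. pose proof (pos_INR (h - l - 1)). lra.
    + rewrite Rabs_R0. nra.
  - rewrite rsum_scal. pose proof (power_partial_sum_bound q e h He Hq1).
    unfold coef_const.
    apply Rle_trans with (B1 * (A1 * Rpower (INR k + INR i + 1) (- p)) *
                          ((1 + / e) * Rpower (INR h) (1 + e - q))).
    + apply Rmult_le_compat_l; auto. repeat apply Rmult_le_pos; lra.
    + right; ring.
Qed.

Definition excess_const k h := (coef_const h * coef_const h * cov_const s2 B1 e) *
   (2 * ((1 + / e) * (1 + / e)) * Rpower (INR k) (- (2 * p - (1 + e - be) - 1 - e))).

Lemma truncated_excess_bound k h N : (1 <= k)%nat ->
  msq (truncated_excess k h N) <= excess_const k h.
Proof.
  intros Hk. unfold truncated_excess.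
  rewrite (vsumn_combine b (fun l i => a (h - l + k + i)%nat) (fun l => (S N - (h - l + k))%nat)
            (fun i => X (- Z.of_nat i)%Z) h (S N)) by (intros; lia).
  eapply Rle_trans.
  { apply (msq_lincomb_bound _ (fun i => coef_const h * Rpower (INR k + INR i + 1) (- p))
                         (fun i j => cov_const s2 B1 e * Rpower (INR (nat_dist i j) + 1) (- be))).
    - intros i. apply truncated_excess_coef; auto.
    - intros i j. apply (cov_bound_past X eps b s2 Heps_unc Heps_var HXma B1 q be e); auto. }
  rewrite (rsum_ext _ (fun i => (coef_const h * coef_const h * cov_const s2 B1 e) *
        rsum (fun j => Rpower (INR k + INR i + 1) (- p) * Rpower (INR k + INR j + 1) (- p)
        * Rpower (INR (nat_dist i j) + 1) (- be)) (S N))).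
  2:{ intros i _. rewrite <- rsum_scal. apply rsum_ext. intros j _. ring. }
  rewrite rsum_scal. unfold excess_const. apply Rmult_le_compat_l.
  - pose proof (coef_const_nonneg h). pose proof (B1_nonneg b B1 q Hb).
    pose proof (s2_nonneg eps s2 Heps_var). pose proof (Rinv_0_lt_compat e He).
    unfold cov_const. apply Rmult_le_pos; [nra|]. apply Rmult_le_pos; nra.
  - apply weighted_double_sum_bound; auto. apply (le_INR 1) in Hk. exact Hk.
Qed.

Lemma excess_split k h N : (h + k <= N)%nat ->
  excess X eps a b k h =
  vadd (truncated_excess k h N)
       (vsumn (fun l => vscal (b l) (vsub (eps (Z.of_nat (k + (h - l))))
          (vsumn (fun j => vscal (a j) (X (Z.of_nat (k + (h - l)) - Z.of_nat j)%Z)) (S N)))) h).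
Proof.
  intros HN. unfold excess, truncated_excess. rewrite <- vsumn_add.
  apply vsumn_ext. intros l Hl. rewrite (ar_tail_split X eps a _ (h - l + k) N) by lia.
  rewrite vscal_distr_v, vadd_comm. do 2 f_equal.
  apply vsumn_ext. intros i _. do 2 f_equal. lia.
Qed.

Lemma excess_bound k h : (1 <= k)%nat -> msq (excess X eps a b k h) <= excess_const k h.
Proof.
  intros Hk.
  apply (msq_le_of_approx _ _ (rsum (fun l => Rabs (b l)) h)).
  { eapply Rle_trans; [apply (msq_pos (truncated_excess k h 0)) | apply truncated_excess_bound, Hk]. }
  { apply rsum_nonneg. intros; apply Rabs_pos. }
  intros t Ht.
  destruct (eventually_forall_lt (fun l N0 => forall N, (N0 <= N)%nat ->
      nrm (vsub (eps (Z.of_nat (k + (h - l))))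
         (vsumn (fun j => vscal (a j) (X (Z.of_nat (k + (h - l)) - Z.of_nat j)%Z)) (S N))) < t) h)
    as [N0 HN0].
  - intros l N1 N2 H12 HP N HN. apply HP. lia.
  - intros l _. apply (cv_nrm _ (HepsAR (Z.of_nat (k + (h - l)))) t Ht).
  - set (N := Nat.max N0 (h + k)).
    eexists; eexists; split; [apply (excess_split k h N); unfold N; lia|]. split.
    + apply truncated_excess_bound; auto.
    + eapply Rle_trans. apply nrm_vsumn. rewrite <- rsum_scal.
      apply rsum_le. intros l Hl. rewrite nrm_scal, Rmult_comm.
      apply Rmult_le_compat_r. apply Rabs_pos. left. apply (HN0 l N Hl); unfold N; lia.
Qed.
End ExcessBound.

(** * Rates *)

Lemma Rpower_shift_base x r : 1 <= x -> r <= 0 -> Rpower x r <= Rpower 2 (- r) * Rpower (x + 1) r.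
Proof.
  intros Hx Hr. replace r with (- - r) at 1 3 by ring. set (q := - r).
  rewrite !Rpower_Ropp.
  assert (Rpower (x + 1) q <= Rpower 2 q * Rpower x q).
  { rewrite Rpower_mult_distr by lra. apply Rle_Rpower_l; unfold q; lra. }
  pose proof (Rpower_pos (x + 1) q). pose proof (Rpower_pos x q). pose proof (Rpower_pos 2 q).
  apply (Rmult_le_reg_r (Rpower x q * Rpower (x + 1) q)). nra.
  field_simplify; lra.
Qed.

Lemma decay_shift (b : nat -> R) C r : b 0%nat = 1 -> r <= 0 ->
  (forall j, (1 <= j)%nat -> Rabs (b j) <= C * Rpower (INR j) r) ->
  forall j, Rabs (b j) <= Rmax 1 (Rabs C * Rpower 2 (- r)) * Rpower (INR j + 1) r.
Proof.
  intros Hb0 Hr HC [|j].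
  - rewrite Hb0, Rabs_R1. cbn [INR]. rewrite Rplus_0_l, Rpower_base_1, Rmult_1_r. apply Rmax_l.
  - assert (Hj : 1 <= INR (S j)) by (rewrite S_INR; pose proof (pos_INR j); lra).
    pose proof (Rpower_shift_base (INR (S j)) r Hj Hr).
    pose proof (Rpower_pos (INR (S j)) r). pose proof (Rpower_pos (INR (S j) + 1) r).
    pose proof (Rabs_pos C). pose proof (Rmax_r 1 (Rabs C * Rpower 2 (- r))).
    eapply Rle_trans. apply HC; lia.
    apply Rle_trans with (Rabs C * Rpower (INR (S j)) r).
    + apply Rmult_le_compat_r. lra. apply Rle_abs.
    + apply Rle_trans with (Rabs C * Rpower 2 (- r) * Rpower (INR (S j) + 1) r).
      * rewrite Rmult_assoc. apply Rmult_le_compat_l; lra.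
      * apply Rmult_le_compat_r; lra.
Qed.

Lemma excess_rate {H : IPSpace} (X eps : Z -> H) (a b : nat -> R) (s2 d eta C1 B1 : R) :
  (forall n m, n <> m -> ip (eps n) (eps m) = 0) ->
  (forall n, msq (eps n) = s2) ->
  (forall n, Un_cv (fun N =>
      msq (vsub (X n) (vsumn (fun j => vscal (b j) (eps (n - Z.of_nat j)%Z)) (S N)))) 0) ->
  (forall n, Un_cv (fun N =>
      msq (vsub (eps n) (vsumn (fun j => vscal (a j) (X (n - Z.of_nat j)%Z)) (S N)))) 0) ->
  0 < d < 1/2 -> 0 < eta -> eta <= (1 - 2 * d) / 6 -> eta <= 1 / 8 ->
  (forall j, (1 <= j)%nat -> Rabs (a j) <= C1 * Rpower (INR j) (- d - 1 + eta)) ->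
  (forall j, Rabs (b j) <= B1 * Rpower (INR j + 1) (d - 1 + eta)) ->
  exists C, 0 <= C /\ forall k h, (1 <= k)%nat ->
    msq (excess X eps a b k h) <= C * (Rpower (INR h) (2 * d + 4 * eta) * Rpower (INR k) (-1 + 7 * eta)).
Proof.
  intros Hunc Hvar HXma HepsAR Hd He He1 He2 HC1 Hb.
  set (p := 1 + d - eta). set (q := 1 - d - eta). set (be := 1 - 2 * d - 3 * eta).
  assert (Ha : forall j, (1 <= j)%nat -> Rabs (a j) <= Rabs C1 * Rpower (INR j) (- p)).
  { intros j Hj. replace (- p) with (- d - 1 + eta) by (unfold p; ring).
    eapply Rle_trans. apply HC1, Hj.
    apply Rmult_le_compat_r. left; apply Rpower_pos. apply Rle_abs. }
  replace (d - 1 + eta) with (- q) in Hb by (unfold q; ring).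
  set (c := B1 * (1 + / eta) * Rabs C1).
  exists (c * c * cov_const s2 B1 eta * (2 * ((1 + / eta) * (1 + / eta)))). split.
  { pose proof (B1_nonneg b B1 q Hb). pose proof (s2_nonneg eps s2 Hvar).
    pose proof (Rinv_0_lt_compat eta He). unfold cov_const.
    apply Rmult_le_pos; [|nra]. apply Rmult_le_pos; [nra|]. apply Rmult_le_pos; nra. }
  intros k h Hk. eapply Rle_trans.
  { apply (excess_bound X eps a b s2 Hunc Hvar HXma HepsAR (Rabs C1) B1 p q be eta Ha Hb);
      unfold p, q, be in *; auto using Rabs_pos; lra. }
  unfold excess_const, coef_const.
  replace (2 * d + 4 * eta) with ((1 + eta - q) + (1 + eta - q)) by (unfold q; ring).
  replace (-1 + 7 * eta) with (- (2 * p - (1 + eta - be) - 1 - eta)) by (unfold p, be; ring).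
  rewrite Rpower_plus. unfold c. right; ring.
Qed.

Lemma small_slack d delta : d < 1/2 -> 0 < delta ->
  exists eta, 0 < eta /\ 7 * eta <= delta /\ eta <= (1 - 2 * d) / 6 /\ eta <= 1 / 8.
Proof.
  intros Hd Hdelta. exists (Rmin (delta / 7) (Rmin ((1 - 2 * d) / 6) (1 / 8))).
  repeat split.
  - repeat apply Rmin_glb_lt; lra.
  - pose proof (Rmin_l (delta / 7) (Rmin ((1 - 2 * d) / 6) (1 / 8))). lra.
  - eapply Rle_trans; [apply Rmin_r | apply Rmin_l].
  - eapply Rle_trans; [apply Rmin_r | apply Rmin_r].
Qed.

Lemma rate_weaken C x y e1 e2 f1 f2 : 0 <= C -> 1 <= x -> 1 <= y -> e1 <= f1 -> e2 <= f2 ->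
  C * (Rpower x e1 * Rpower y e2) <= C * Rpower x f1 * Rpower y f2.
Proof.
  intros HC Hx Hy H1 H2. rewrite Rmult_assoc. apply Rmult_le_compat_l; auto.
  apply Rmult_le_compat; try (left; apply Rpower_pos); apply Rle_Rpower; auto.
Qed.

(** Only the uncorrelatedness and common variance of the
    innovations, the MA(oo) and AR(oo) representations, [a_0 = b_0 = 1],
    [A(z) B(z) = 1] and the decay bounds are used. *)
Theorem proposition2
  (d : R) (Hd : 0 < d < 1/2)
  (H : IPSpace) (one : H) (Hone : msq one = 1)
  (X eps : Z -> H) (sigma : Z -> R) (s2 : R) (a b : nat -> R)
  (* zero mean *)
  (HXmean : forall n, ip (X n) one = 0)
  (* weak stationarity, sigma = autocovariance *)
  (Hstat : forall n j, ip (X n) (X (n + j)%Z) = sigma j)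
  (* sum_j |sigma(j)| = infinity *)
  (Hlong : forall M : R, exists N : nat,
      M < sum_f_R0 (fun i => Rabs (sigma (Z.of_nat i)) + Rabs (sigma (- Z.of_nat i)%Z)) N)
  (* innovations: uncorrelated, mean 0, variance s2 > 0 *)
  (Hepsmean : forall n, ip (eps n) one = 0)
  (Heps_unc : forall n m, n <> m -> ip (eps n) (eps m) = 0)
  (Heps_var : forall n, msq (eps n) = s2)
  (Hs2 : 0 < s2)
  (* MA(infinity) representation *)
  (Hb0 : b 0%nat = 1)
  (Hb2 : exists l, Un_cv (fun N => sum_f_R0 (fun j => (b j) ^ 2) N) l)
  (HXma : forall n, Un_cv (fun N =>
      msq (vsub (X n) (vsumn (fun j => vscal (b j) (eps (n - Z.of_nat j)%Z)) (S N)))) 0)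
  (* AR(infinity) representation *)
  (Ha0 : a 0%nat = 1)
  (Ha1 : exists l, Un_cv (fun N => sum_f_R0 (fun j => Rabs (a j)) N) l)
  (HepsAR : forall n, Un_cv (fun N =>
      msq (vsub (eps n) (vsumn (fun j => vscal (a j) (X (n - Z.of_nat j)%Z)) (S N)))) 0)
  (* A(z) B(z) = 1 as power series (Cauchy product coefficients) *)
  (HAB : forall n, sum_f_R0 (fun i => a i * b (n - i)%nat) n = if (n =? 0)%nat then 1 else 0)
  (* coefficient decay *)
  (Hadec : forall delta, 0 < delta -> exists C1, forall j : nat, (1 <= j)%nat ->
      Rabs (a j) <= C1 * Rpower (INR j) (- d - 1 + delta))
  (Hbdec : forall delta, 0 < delta -> exists C2, forall j : nat, (1 <= j)%nat ->
      Rabs (b j) <= C2 * Rpower (INR j) (d - 1 + delta)) :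
  forall delta, 0 < delta -> exists C, forall k h : nat, (1 <= k)%nat -> (1 <= h)%nat ->
    Rabs (msq (vsub (predictor a X k h) (X (Z.of_nat (k + h))))
          - s2 * sum_f_R0 (fun l => (b l) ^ 2) (h - 1))
    <= C * Rpower (INR h) (2 * d + delta) * Rpower (INR k) (-1 + delta).
Proof.
  intros delta Hdelta.
  destruct (small_slack d delta (proj2 Hd) Hdelta) as (eta & He & He1 & He2 & He3).
  destruct (Hadec eta He) as [C1 HC1]. destruct (Hbdec eta He) as [C2 HC2].
  pose proof (decay_shift b C2 (d - 1 + eta) Hb0 ltac:(lra) HC2) as Hb.
  destruct (excess_rate X eps a b s2 d eta C1 _ Heps_unc Heps_var HXma HepsAR
              Hd He He2 He3 HC1 Hb) as (C & HC0 & HC).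
  exists C. intros k h Hk Hh.
  change (vsub (predictor a X k h) (X (Z.of_nat (k + h)))) with (pred_error a X k h).
  rewrite (pred_error_decomposition X eps a b s2 Heps_unc Heps_var HXma HepsAR Ha0 HAB k h Hh).
  replace (h - 1)%nat with (pred h) by lia. rewrite <- rsum_sum_f_R0, (Nat.succ_pred_pos h) by lia.
  replace (s2 * rsum (fun l => b l ^ 2) h + msq (excess X eps a b k h) - s2 * rsum (fun l => b l ^ 2) h)
    with (msq (excess X eps a b k h)) by ring.
  rewrite Rabs_right by (apply Rle_ge, msq_pos).
  eapply Rle_trans. apply HC, Hk.
  apply rate_weaken; auto; try lra; apply (le_INR 1); auto.
Qed.
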